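(* Let $T_1$ and $T_2$ be completely nonunitary contractions. If the algebra $H^\infty(T_1\oplus T_2)$ has the closability property, then so do $H^\infty(T_1)$ and $H^\infty(T_2)$.
   Context: A contraction is completely nonunitary if it has no nontrivial unitary direct summand; $u\mapsto u(T)$ is its Sz.-Nagy–Foias $H^\infty$ functional calculus and $H^\infty(T)=\{u(T):u\in H^\infty\}$. A unital algebra has the closability property if every densely defined linear transformation commuting with it (domain dense and invariant, commuting on the domain) is closable, i.e. the closure of its graph is a graph. *)

From HB Require Import structures.
From mathcomp Require Import all_boot all_order all_algebra.
From mathcomp Require Import reals.
From mathcomp Require Import complex.
Set Implicit Arguments. Unset Strict Implicit. Unset Printing Implicit Defensive.
Import Order.TTheory GRing.Theory Num.Theory.
Local Open Scope ring_scope.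
Local Open Scope complex_scope.

Section Hilbert.
Variable R : realType.
Local Notation C := R[i].
Variable V : lmodType C.
(* ip : the inner product (linear in the first variable) *)
Variable ip : V -> V -> C.

Definition vnorm (x : V) : R := Num.sqrt (complex.Re (ip x x)).

Definition cauchy_seq (s : nat -> V) : Prop :=
  forall eps : R, 0 < eps -> exists N : nat,
    forall m n : nat, (N <= m)%N -> (N <= n)%N -> vnorm (s m - s n) < eps.

Definition seq_to (s : nat -> V) (x : V) : Prop :=
  forall eps : R, 0 < eps -> exists N : nat,
    forall n : nat, (N <= n)%N -> vnorm (s n - x) < eps.

Definition hilbert : Prop :=
  [/\ (forall (a : C) (x y z : V), ip (a *: x + y) z = a * ip x z + ip y z),
      (forall x y : V, ip y x = (ip x y)^*),
      (forall x : V, 0 <= ip x x),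
      (forall x : V, ip x x = 0 -> x = 0) &
      (forall s : nat -> V, cauchy_seq s -> exists x, seq_to s x)].

Definition linear_op (T : V -> V) : Prop :=
  forall (a : C) (x y : V), T (a *: x + y) = a *: T x + T y.

Definition contraction (T : V -> V) : Prop :=
  linear_op T /\ forall x : V, vnorm (T x) <= vnorm x.

Definition subspace (M : V -> Prop) : Prop :=
  M 0 /\ forall (a : C) (x y : V), M x -> M y -> M (a *: x + y).

Definition closed_set (M : V -> Prop) : Prop :=
  forall x : V, (forall eps : R, 0 < eps -> exists m, M m /\ vnorm (x - m) < eps)
    -> M x.

Definition orth (M : V -> Prop) (x : V) : Prop := forall m, M m -> ip x m = 0.

(* T has no nonzero reducing subspace M on which T is unitary *)
Definition cnu (T : V -> V) : Prop :=
  forall M : V -> Prop, subspace M -> closed_set M ->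
    (forall x, M x -> M (T x)) ->
    (forall x, orth M x -> orth M (T x)) ->
    (forall x, M x -> vnorm (T x) = vnorm x) ->
    (forall y, M y -> exists x, M x /\ T x = y) ->
    forall x, M x -> x = 0.

(* H^oo, through Taylor coefficients: a : nat -> C is the coefficient sequence
   of a bounded holomorphic function on the open unit disc *)
Definition cseries_to (c : nat -> C) (s : C) : Prop :=
  forall eps : R, 0 < eps -> exists N : nat,
    forall n : nat, (N <= n)%N -> `|\sum_(k < n) c k - s| < eps%:C.

Definition Hinf (a : nat -> C) : Prop :=
  exists M : R, forall z : C, `|z| < 1 ->
    exists s : C, cseries_to (fun n => a n * z ^+ n) s /\ `|s| <= M%:C.

Definition vseries_to (c : nat -> V) (y : V) : Prop :=
  seq_to (fun n => \sum_(k < n) c k) y.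

(* Sz.-Nagy--Foias calculus: u(T) x = lim_{r -> 1-} u_r(T) x, where
   u_r(T) x = sum_n a_n r^n T^n x *)
Definition funcalc (T : V -> V) (a : nat -> C) (S : V -> V) : Prop :=
  forall x : V, exists Y : R -> V,
    (forall r : R, 0 < r < 1 ->
       vseries_to (fun n => (a n * (r ^+ n)%:C) *: iter n T x) (Y r)) /\
    (forall eps : R, 0 < eps -> exists d : R, 0 < d /\
       forall r : R, 1 - d < r < 1 -> vnorm (Y r - S x) < eps).

Definition Hinf_alg (T : V -> V) (S : V -> V) : Prop :=
  exists a : nat -> C, Hinf a /\ funcalc T a S.

Definition dense (D : V -> Prop) : Prop :=
  forall x : V, forall eps : R, 0 < eps -> exists d, D d /\ vnorm (x - d) < eps.

Definition linear_on (D : V -> Prop) (L : V -> V) : Prop :=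
  forall (a : C) (x y : V), D x -> D y -> L (a *: x + y) = a *: L x + L y.

Definition graph_closure (D : V -> Prop) (L : V -> V) (x y : V) : Prop :=
  forall eps : R, 0 < eps -> exists d, D d /\ vnorm (x - d) < eps /\
    vnorm (y - L d) < eps.

Definition closable (D : V -> Prop) (L : V -> V) : Prop :=
  forall x y y' : V, graph_closure D L x y -> graph_closure D L x y' -> y = y'.

Definition closability (A : (V -> V) -> Prop) : Prop :=
  forall (D : V -> Prop) (L : V -> V),
    subspace D -> dense D -> linear_on D L ->
    (forall S, A S -> forall x, D x -> D (S x)) ->
    (forall S, A S -> forall x, D x -> L (S x) = S (L x)) ->
    closable D L.

End Hilbert.

Definition ip_sum (R : realType) (V1 V2 : lmodType R[i])
  (ip1 : V1 -> V1 -> R[i]) (ip2 : V2 -> V2 -> R[i]) (p q : V1 * V2) : R[i] :=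
  ip1 p.1 q.1 + ip2 p.2 q.2.

Definition dsum (V1 V2 : Type) (T1 : V1 -> V1) (T2 : V2 -> V2) (p : V1 * V2)
  : V1 * V2 := (T1 p.1, T2 p.2).

(* The two summands of T1 (+) T2 are reducing, so every u(T1 (+) T2) acts
   coordinatewise: its first coordinate depends only on the first coordinate
   of the argument, and on V1 it is u(T1).  A densely defined L commuting with
   H^oo(T1) therefore extends to L (+) id on (dom L) (+) V2, which commutes with
   H^oo(T1 (+) T2); closability of this extension gives closability of L. *)
From mathcomp Require Import all_boot all_order all_algebra.
From mathcomp Require Import reals complex ring lra.
Set Implicit Arguments. Unset Strict Implicit. Unset Printing Implicit Defensive.
Import Order.TTheory GRing.Theory Num.Theory.
Local Open Scope ring_scope.
Local Open Scope complex_scope.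

Lemma ReD (R : realType) (a b : R[i]) :
  complex.Re (a + b) = complex.Re a + complex.Re b.
Proof. by case: a; case: b. Qed.

Section InnerProduct.
Variables (R : realType) (V : lmodType R[i]) (ip : V -> V -> R[i]).
Hypothesis ipH : hilbert ip.

Lemma ipDl x y z : ip (x + y) z = ip x z + ip y z.
Proof. by case: ipH => lin _ _ _ _; rewrite -{1}[x]scale1r lin mul1r. Qed.

Lemma ip0l z : ip 0 z = 0.
Proof. by apply: (@addrI _ (ip 0 z)); rewrite -ipDl !addr0. Qed.

Lemma ipNl x z : ip (- x) z = - ip x z.
Proof.
case: ipH => lin _ _ _ _.
by have := lin (-1) x 0 z; rewrite addr0 scaleN1r ip0l addr0 mulN1r.
Qed.

Lemma ipDr x y z : ip z (x + y) = ip z x + ip z y.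
Proof.
by case: ipH => _ sym _ _ _; rewrite (sym (x + y)) ipDl rmorphD (sym x) (sym y).
Qed.

Lemma ipNr x z : ip z (- x) = - ip z x.
Proof. by case: ipH => _ sym _ _ _; rewrite (sym (- x)) ipNl rmorphN (sym x). Qed.

Lemma Re_ip_ge0 x : 0 <= complex.Re (ip x x).
Proof. by case: ipH => _ _ pos _ _; have := pos x; rewrite lecE => /andP[]. Qed.

Local Notation sqn x := (complex.Re (ip x x)).

Lemma sqnD_le x y : sqn (x + y) <= 2 * sqn x + 2 * sqn y.
Proof.
have parallelogram : sqn (x + y) + sqn (x - y) = 2 * sqn x + 2 * sqn y.
  rewrite -ReD; have -> : ip (x + y) (x + y) + ip (x - y) (x - y)
      = 2 * ip x x + 2 * ip y y by rewrite !ipDl !ipDr !ipNl !ipNr; ring.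
  by rewrite ReD; case: (ip x x) => ? ?; case: (ip y y) => ? ? /=; ring.
by rewrite -parallelogram lerDl Re_ip_ge0.
Qed.

Lemma sqn_lt x eps : 0 < eps -> vnorm ip x < eps -> sqn x < eps ^+ 2.
Proof.
by move=> eps_gt0 x_lt; rewrite -ltr_sqrt ?exprn_gt0 // sqrtr_sqr gtr0_norm.
Qed.

Lemma sqn_eq0 x : sqn x = 0 -> x = 0.
Proof.
case: ipH => _ _ pos def _ sqn0; apply: def.
move: (pos x) sqn0; rewrite lecE.
by case: (ip x x) => a b /= /andP[/eqP -> _] ->.
Qed.

Lemma vnormN x : vnorm ip (- x) = vnorm ip x.
Proof. by rewrite /vnorm ipNl ipNr opprK. Qed.

Lemma common_approx_eq u v :
  (forall eps : R, 0 < eps ->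
     exists s, vnorm ip (s - u) < eps /\ vnorm ip (s - v) < eps) ->
  u = v.
Proof.
move=> approx; apply/eqP; rewrite -subr_eq0; apply/eqP/sqn_eq0.
have sqn_small eps : 0 < eps -> sqn (u - v) < 4 * eps ^+ 2.
  move=> eps_gt0; have [s [su sv]] := approx eps eps_gt0.
  rewrite -vnormN opprB in su.
  have -> : u - v = (u - s) + (s - v) by rewrite addrA subrK.
  have := sqnD_le (u - s) (s - v).
  have := sqn_lt eps_gt0 su; have := sqn_lt eps_gt0 sv; lra.
apply/eqP; rewrite eq_le Re_ip_ge0 andbT leNgt; apply/negP => sqn_gt0.
have eps_gt0 : 0 < Num.sqrt (sqn (u - v)) / 4 by rewrite divr_gt0 // sqrtr_gt0.
by have := sqn_small _ eps_gt0; rewrite expr_div_n sqr_sqrtr ?Re_ip_ge0 //; lra.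
Qed.

Lemma seq_to_unique (s : nat -> V) x y : seq_to ip s x -> seq_to ip s y -> x = y.
Proof.
move=> sx sy; apply: common_approx_eq => eps eps_gt0.
have [Nx hx] := sx eps eps_gt0; have [Ny hy] := sy eps eps_gt0.
by exists (s (maxn Nx Ny)); rewrite hx ?hy ?leq_maxl ?leq_maxr.
Qed.

End InnerProduct.

(* [funcalc_at ip T a x y] says y = u(T) x; [funcalc ip T a S] unfolds to
   [forall x, funcalc_at ip T a x (S x)]. *)
Definition funcalc_at (R : realType) (V : lmodType R[i]) (ip : V -> V -> R[i])
    (T : V -> V) (a : nat -> R[i]) (x y : V) : Prop :=
  exists Y : R -> V,
    (forall r : R, 0 < r < 1 ->
       vseries_to ip (fun n => (a n * (r ^+ n)%:C) *: iter n T x) (Y r)) /\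
    (forall eps : R, 0 < eps -> exists d : R, 0 < d /\
       forall r : R, 1 - d < r < 1 -> vnorm ip (Y r - y) < eps).

Section FunctionalCalculus.
Variables (R : realType) (V : lmodType R[i]) (ip : V -> V -> R[i]).
Hypothesis ipH : hilbert ip.

Lemma funcalc_at_unique (T : V -> V) a x y y' :
  funcalc_at ip T a x y -> funcalc_at ip T a x y' -> y = y'.
Proof.
move=> [Y [Yseries Ylim]] [Y' [Y'series Y'lim]].
have eqY r : 0 < r < 1 -> Y r = Y' r.
  by move=> r01; apply: (seq_to_unique ipH); [exact: Yseries | exact: Y'series].
apply: (common_approx_eq ipH) => eps eps_gt0.
have [d [d_gt0 Yd]] := Ylim eps eps_gt0.
have [d' [d'_gt0 Y'd']] := Y'lim eps eps_gt0.
pose m := Num.min (Num.min d d') 1.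
have m_gt0 : 0 < m by rewrite !lt_min d_gt0 d'_gt0 ltr01.
have [m_le_d m_le_d' m_le1] : [/\ m <= d, m <= d' & m <= 1].
  by rewrite !ge_min !lexx !orbT.
have r01 : 0 < 1 - m / 2 < 1 by apply/andP; split; lra.
exists (Y (1 - m / 2)); split; first by apply: Yd; apply/andP; split; lra.
by rewrite eqY //; apply: Y'd'; apply/andP; split; lra.
Qed.

End FunctionalCalculus.

Section Intertwining.
Variables (R : realType) (W V : lmodType R[i]).
Variables (ipW : W -> W -> R[i]) (ipV : V -> V -> R[i]).
Variables (TW : W -> W) (TV : V -> V) (pi : {linear W -> V}).
Hypothesis piT : forall w, pi (TW w) = TV (pi w).
Hypothesis pi_contractive : forall w, vnorm ipV (pi w) <= vnorm ipW w.

Lemma iter_intertwine n w : pi (iter n TW w) = iter n TV (pi w).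
Proof. by elim: n => //= n <-; rewrite piT. Qed.

Lemma funcalc_at_intertwine a w y :
  funcalc_at ipW TW a w y -> funcalc_at ipV TV a (pi w) (pi y).
Proof.
move=> [Y [Yseries Ylim]]; exists (pi \o Y); split.
- move=> r r01 eps eps_gt0; have [N YN] := Yseries r r01 eps eps_gt0.
  exists N => n le_Nn; have := le_lt_trans (pi_contractive _) (YN n le_Nn).
  rewrite raddfB /= linear_sum.
  by under eq_bigr do rewrite -iter_intertwine -linearZZ.
- move=> eps eps_gt0; have [d [d_gt0 Yd]] := Ylim eps eps_gt0.
  exists d; split => // r r_near1.
  by have := le_lt_trans (pi_contractive _) (Yd r r_near1); rewrite raddfB.
Qed.

Lemma Hinf_alg_compress (iota : V -> W) (S : W -> W) :
  cancel iota pi ->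
  Hinf_alg ipW TW S -> Hinf_alg ipV TV (fun x => pi (S (iota x))).
Proof.
move=> iotaK [a [a_Hinf aS]]; exists a; split => // x.
by rewrite -{1}[x]iotaK; apply: funcalc_at_intertwine; apply: aS.
Qed.

Hypothesis ipVH : hilbert ipV.

Lemma Hinf_alg_intertwine_eq (S : W -> W) w w' :
  Hinf_alg ipW TW S -> pi w = pi w' -> pi (S w) = pi (S w').
Proof.
move=> [a [_ aS]] eq_pi; apply: (funcalc_at_unique ipVH (x := pi w)).
  exact/funcalc_at_intertwine/aS.
by rewrite eq_pi; apply/funcalc_at_intertwine/aS.
Qed.

End Intertwining.

Section ReducingSummand.
Variables (R : realType) (W V U : lmodType R[i]).
Variables (ipW : W -> W -> R[i]) (ipV : V -> V -> R[i]) (ipU : U -> U -> R[i]).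
Variables (TW : W -> W) (TV : V -> V) (TU : U -> U).
Variables (p1 : {linear W -> V}) (p2 : {linear W -> U}) (mk : V -> U -> W).
Hypothesis p1_mk : forall v u, p1 (mk v u) = v.
Hypothesis p2_mk : forall v u, p2 (mk v u) = u.
Hypothesis mk_p : forall w, mk (p1 w) (p2 w) = w.
Hypothesis p1T : forall w, p1 (TW w) = TV (p1 w).
Hypothesis p2T : forall w, p2 (TW w) = TU (p2 w).
Hypothesis p1_contractive : forall w, vnorm ipV (p1 w) <= vnorm ipW w.
Hypothesis p2_contractive : forall w, vnorm ipU (p2 w) <= vnorm ipW w.
Hypothesis vnorm_mk0 : forall v, vnorm ipW (mk v 0) = vnorm ipV v.
Hypothesis ipVH : hilbert ipV.
Hypothesis ipUH : hilbert ipU.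

Lemma decomp_eq w w' : p1 w = p1 w' -> p2 w = p2 w' -> w = w'.
Proof. by move=> eq1 eq2; rewrite -[w]mk_p -[w']mk_p eq1 eq2. Qed.

Lemma mkB v u v' u' : mk v u - mk v' u' = mk (v - v') (u - u').
Proof. by apply: decomp_eq; rewrite !raddfB /= ?p1_mk ?p2_mk. Qed.

Lemma mk_linear a v u v' u' :
  mk (a *: v + v') (a *: u + u') = a *: mk v u + mk v' u'.
Proof. by apply: decomp_eq; rewrite !linearP /= ?p1_mk ?p2_mk. Qed.

Definition ext_dom (D : V -> Prop) (w : W) : Prop := D (p1 w).

Definition ext_op (L : V -> V) (w : W) : W := mk (L (p1 w)) (p2 w).

Lemma Hinf_alg_corner S :
  Hinf_alg ipW TW S -> Hinf_alg ipV TV (fun v => p1 (S (mk v 0))).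
Proof. by apply: Hinf_alg_compress => // v; rewrite p1_mk. Qed.

Lemma Hinf_alg_p1_eq S w w' :
  Hinf_alg ipW TW S -> p1 w = p1 w' -> p1 (S w) = p1 (S w').
Proof. exact: Hinf_alg_intertwine_eq. Qed.

Lemma Hinf_alg_p2_eq S w w' :
  Hinf_alg ipW TW S -> p2 w = p2 w' -> p2 (S w) = p2 (S w').
Proof. exact: Hinf_alg_intertwine_eq. Qed.

Lemma ext_dom_dense D : dense ipV D -> dense ipW (ext_dom D).
Proof.
move=> D_dense w eps eps_gt0; have [d [Dd d_near]] := D_dense (p1 w) eps eps_gt0.
exists (mk d (p2 w)); split; first by rewrite /ext_dom p1_mk.
by rewrite -{1}[w]mk_p mkB subrr vnorm_mk0.
Qed.

Lemma ext_dom_invariant D S :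
  (forall S, Hinf_alg ipV TV S -> forall x, D x -> D (S x)) ->
  Hinf_alg ipW TW S -> forall w, ext_dom D w -> ext_dom D (S w).
Proof.
move=> D_inv HS w Dw; rewrite /ext_dom (Hinf_alg_p1_eq (w' := mk (p1 w) 0) HS).
  exact: D_inv (Hinf_alg_corner HS) _ Dw.
by rewrite p1_mk.
Qed.

Lemma ext_op_commute D L S :
  (forall S, Hinf_alg ipV TV S -> forall x, D x -> L (S x) = S (L x)) ->
  Hinf_alg ipW TW S -> forall w, ext_dom D w -> ext_op L (S w) = S (ext_op L w).
Proof.
move=> L_comm HS w Dw; apply: decomp_eq; rewrite /ext_op ?p1_mk ?p2_mk.
- rewrite (Hinf_alg_p1_eq (w' := mk (p1 w) 0) HS) ?p1_mk //.
  rewrite (L_comm _ (Hinf_alg_corner HS)) //.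
  by apply: (Hinf_alg_p1_eq HS); rewrite p1_mk.
- by apply: (Hinf_alg_p2_eq HS); rewrite p2_mk.
Qed.

Lemma graph_closure_ext D L x z :
  graph_closure ipV D L x z ->
  graph_closure ipW (ext_dom D) (ext_op L) (mk x 0) (mk z 0).
Proof.
move=> xz eps eps_gt0; have [d [Dd [d_near Ld_near]]] := xz eps eps_gt0.
by exists (mk d 0); rewrite /ext_dom /ext_op !p1_mk p2_mk !mkB subrr !vnorm_mk0.
Qed.

Lemma closability_Hinf_summand :
  closability ipW (Hinf_alg ipW TW) -> closability ipV (Hinf_alg ipV TV).
Proof.
move=> HW D L D_sub D_dense L_lin D_inv L_comm x y y' xy xy'.
have ext_closable : closable ipW (ext_dom D) (ext_op L).
  apply: HW => //.
  - case: D_sub => D0 D_comb; split => [|a w w' Dw Dw']; rewrite /ext_dom.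
      by rewrite raddf0.
    by rewrite linearP; apply: D_comb.
  - exact: ext_dom_dense.
  - by move=> a w w' Dw Dw'; rewrite /ext_op !linearP /= L_lin // mk_linear.
  - by move=> S HS; apply: ext_dom_invariant.
  - by move=> S HS; apply: ext_op_commute.
have := ext_closable _ _ _ (graph_closure_ext xy) (graph_closure_ext xy').
by move/(congr1 p1); rewrite !p1_mk.
Qed.

End ReducingSummand.

Section DirectSum.
Variables (R : realType) (V1 V2 : lmodType R[i]).
Variables (ip1 : V1 -> V1 -> R[i]) (ip2 : V2 -> V2 -> R[i]).
Hypotheses (ip1H : hilbert ip1) (ip2H : hilbert ip2).
Local Notation ipS := (ip_sum ip1 ip2).

Lemma vnorm_sum_fst p : vnorm ip1 p.1 <= vnorm ipS p.
Proof. by rewrite /vnorm /ip_sum ReD ler_wsqrtr // lerDl Re_ip_ge0. Qed.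

Lemma vnorm_sum_snd p : vnorm ip2 p.2 <= vnorm ipS p.
Proof. by rewrite /vnorm /ip_sum ReD ler_wsqrtr // lerDr Re_ip_ge0. Qed.

Lemma vnorm_sum_pair0 v : vnorm ipS (v, 0) = vnorm ip1 v.
Proof. by rewrite /vnorm /ip_sum /= ip0l // addr0. Qed.

Lemma vnorm_sum_0pair v : vnorm ipS (0, v) = vnorm ip2 v.
Proof. by rewrite /vnorm /ip_sum /= ip0l // add0r. Qed.

End DirectSum.

Theorem lemma5p6 (R : realType) (V1 V2 : lmodType R[i])
  (ip1 : V1 -> V1 -> R[i]) (ip2 : V2 -> V2 -> R[i])
  (T1 : V1 -> V1) (T2 : V2 -> V2) :
  hilbert ip1 -> hilbert ip2 ->
  contraction ip1 T1 -> contraction ip2 T2 ->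
  cnu ip1 T1 -> cnu ip2 T2 ->
  closability (ip_sum ip1 ip2) (Hinf_alg (ip_sum ip1 ip2) (dsum T1 T2)) ->
  closability ip1 (Hinf_alg ip1 T1) /\ closability ip2 (Hinf_alg ip2 T2).
Proof.
(* Neither the contraction nor the c.n.u. hypothesis is needed. *)
move=> ip1H ip2H _ _ _ _ HS; split.
- apply: (closability_Hinf_summand (ipU := ip2) (TU := T2) (p1 := fst) (p2 := snd)
    (mk := pair)) HS => //; first by case.
  + exact: vnorm_sum_fst.
  + exact: vnorm_sum_snd.
  + exact: vnorm_sum_pair0.
- apply: (closability_Hinf_summand (ipU := ip1) (TU := T1) (p1 := snd) (p2 := fst)
    (mk := fun v u => (u, v))) HS => //; first by case.
  + exact: vnorm_sum_snd.
  + exact: vnorm_sum_fst.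
  + exact: vnorm_sum_0pair.
Qed.
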